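(* Under the hypotheses of the construction below, if in addition $p>3$, then $\{M^sT^t\mathbf{1}_D\}_{s,t\in\mathbb{Z}/d\mathbb{Z}}$ is an $(a,c_1,c_2)$-projective $2$-design for $\mathbb{F}_{q^2}^d$ with $a=2$, $c_1=2d$ and $c_2=6$. Construction: $p$ prime, $k\ge1$, $r$ a prime power with $p\mid r-1$ and $r^2+r+1\mid p^k+1$; $q=p^k$, $d=r^2+r+1$; $D\subseteq\mathbb{Z}/d\mathbb{Z}$ is the Singer difference set; $\alpha$ is a primitive element of $\mathbb{F}_{q^2}^\times$, $\omega=\alpha^{(q^2-1)/d}$; $(Tf)(x)=f(x-1)$, $(Mf)(x)=\omega^xf(x)$ for $f:\mathbb{Z}/d\mathbb{Z}\to\mathbb{F}_{q^2}$.
   Context: Vectors in $\mathbb{F}_{q^2}^d$ are identified with functions $\mathbb{Z}/d\mathbb{Z}\to\mathbb{F}_{q^2}$; $\mathbf{1}_D$ is the indicator of $D$. The Singer difference set is a cyclic difference set with parameters $(r^2+r+1,r+1,1)$: $|D|=r+1$ and every nonzero element of $\mathbb{Z}/d\mathbb{Z}$ is uniquely $x-y$ with $x,y\in D$. For $a\in\mathbb{F}_{q^2}$, $\overline{a}=a^q$; $A^*$ is conjugate transpose; $\langle x,y\rangle=x^*y$ on $\mathbb{F}_{q^2}^d$ and analogously on $(\mathbb{F}_{q^2}^d)^{\otimes2}$. For a nondegenerate subspace $V$ ($V\cap V^\perp=\{0\}$), $\{y_j\}$ in $V$ is a $c$-tight frame for $V$ if it spans $V$ and $\sum_j\langle y_j,y\rangle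 y_j=cy$ for all $y\in V$. $(\mathbb{F}_{q^2}^d)^{\otimes2}_{\mathrm{sym}}=\{\sum_{i,j}c_{ij}e_i\otimes e_j:c_{ij}=c_{ji}\}$ (nondegenerate for $q$ odd). A family $\{x_k\}$ in $\mathbb{F}_{q^2}^d$ is an $(a,c_1,c_2)$-projective $2$-design if $\langle x_k,x_k\rangle=a$ for all $k$, $\{x_k\}$ is a $c_1$-tight frame for $\mathbb{F}_{q^2}^d$, and $\{x_k\otimes x_k\}$ is a $c_2$-tight frame for $(\mathbb{F}_{q^2}^d)^{\otimes2}_{\mathrm{sym}}$. Integer parameters are read in $\mathbb{F}_q$. *)

From HB Require Import structures.
From mathcomp Require Import all_boot all_order all_algebra all_field.
Set Implicit Arguments. Unset Strict Implicit. Unset Printing Implicit Defensive.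
Import GRing.Theory.
Local Open Scope ring_scope.

(* Vectors in F^d are functions 'Z_d -> F (d > 1 in all uses);
   tensors in (F^d)^{(x)2} are functions 'Z_d -> 'Z_d -> F,
   e_i (x) e_j  <->  indicator of (i,j). *)

Section Defs.
Variables (F : fieldType) (q d : nat).

Definition conjq (a : F) : F := a ^+ q.

Definition inner (x y : 'Z_d -> F) : F := \sum_(i : 'Z_d) conjq (x i) * y i.

Definition inner2 (X Y : 'Z_d -> 'Z_d -> F) : F :=
  \sum_(i : 'Z_d) \sum_(j : 'Z_d) conjq (X i j) * Y i j.

Definition tensor2 (x : 'Z_d -> F) : 'Z_d -> 'Z_d -> F := fun i j => x i * x j.

Definition is_sym (X : 'Z_d -> 'Z_d -> F) : Prop := forall i j, X i j = X j i.

Definition shiftT (f : 'Z_d -> F) : 'Z_d -> F := fun x => f (x - 1).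

Definition modM (omega : F) (f : 'Z_d -> F) : 'Z_d -> F :=
  fun x => omega ^+ (val x) * f x.

Definition indic (D : {set 'Z_d}) : 'Z_d -> F := fun x => if x \in D then 1 else 0.

Definition tight_frame_full (I : finType) (y : I -> 'Z_d -> F) (c : F) : Prop :=
  (forall v : 'Z_d -> F, exists coef : I -> F,
      forall i, v i = \sum_(j : I) coef j * y j i) /\
  (forall v : 'Z_d -> F, forall i,
      \sum_(j : I) inner (y j) v * y j i = c * v i).

Definition tight_frame_sym (I : finType) (Y : I -> 'Z_d -> 'Z_d -> F) (c : F) : Prop :=
  (forall j, is_sym (Y j)) /\
  (forall V, is_sym V -> exists coef : I -> F,
      forall a b, V a b = \sum_(j : I) coef j * Y j a b) /\
  (forall V, is_sym V -> forall a b,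
      \sum_(j : I) inner2 (Y j) V * Y j a b = c * V a b).

Definition projective_2design (I : finType) (x : I -> 'Z_d -> F) (a c1 c2 : F) : Prop :=
  (forall k, inner (x k) (x k) = a) /\
  tight_frame_full x c1 /\
  tight_frame_sym (fun k => tensor2 (x k)) c2.

End Defs.

Definition cyclic_diff_set (d m : nat) (D : {set 'Z_d}) : Prop :=
  #|D| = m /\
  forall z : 'Z_d, z != 0 ->
    exists! xy : 'Z_d * 'Z_d, [&& xy.1 \in D, xy.2 \in D & xy.1 - xy.2 == z].

Definition prime_power (r : nat) : Prop :=
  exists l e : nat, prime l /\ (0 < e)%N /\ r = (l ^ e)%N.

From Pilot Require Import Defs.
From HB Require Import structures.
From mathcomp Require Import all_boot all_order all_algebra all_field.
From mathcomp Require Import ring.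
From Stdlib Require Import FunctionalExtensionality.
Import GRing.Theory.
Set Implicit Arguments. Unset Strict Implicit.
Local Open Scope ring_scope.

(* The vector x_{s,t} = M^s T^t 1_D has coordinates omega^(s i) 1_D(i - t).
   Both frame identities are computed by expanding the inner products and
   summing first over the modulation index s: by orthogonality of the
   characters of Z/dZ (Characters), and because a |-> a^q inverts omega when
   d | q + 1, this sum is d times a Dirac mass.  What is left is a count of
   common points of translates of D (DifferenceSets): a translate has |D|
   points, two distinct translates share exactly one, and four translates
   u - D, (a+b-u) - D, a - D, b - D share a point only if u is a or b.
   With |D| = 2 in F this gives the constants 2d for both frames (SingerDesign);
   the reconstruction identities with invertible constants already imply the
   spanning conditions (TightFrames).  Finally the number theory of the
   construction gives r = 1 in F, so |D| = 2, 2d = 6 != 0 as p > 3, and omega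
   is a primitive d-th root of unity, which proves mainTheorem12. *)

Lemma conjqM (F : fieldType) (q : nat) (a b : F) : conjq q (a * b) = conjq q a * conjq q b.
Proof. exact: exprMn. Qed.

Lemma conjqX (F : fieldType) (q n : nat) (a : F) : conjq q (a ^+ n) = conjq q a ^+ n.
Proof. exact: exprAC. Qed.

Section Characters.
Variables (F : fieldType) (d : nat) (omega : F).
Hypotheses (d_gt1 : (1 < d)%N) (omega_prim : d.-primitive_root omega).

Local Notation chi x := (omega ^+ val (x : 'Z_d)).

Lemma chiD (x y : 'Z_d) : chi (x + y) = chi x * chi y.
Proof.
have omega_prim' : (Zp_trunc d).+2.-primitive_root omega by rewrite Zp_cast.
by rewrite /= prim_expr_mod // exprD.
Qed.

Lemma chi_neq0 (x : 'Z_d) : chi x != 0.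
Proof.
apply: expf_neq0; apply: contra_eq_neq (prim_expr_order omega_prim) => ->.
by rewrite expr0n gtn_eqF 1?eq_sym ?oner_eq0 // ltnW.
Qed.

Lemma conj_chi (q : nat) (x : 'Z_d) : (d %| q.+1)%N -> conjq q (chi x) = chi (- x).
Proof.
move=> dvd_d_q1; apply: (mulIf (chi_neq0 x)).
rewrite -chiD addNr expr0 /conjq -exprSr -exprM mulnC exprM.
have /eqP -> : omega ^+ q.+1 == 1 by rewrite -(prim_order_dvd omega_prim).
by rewrite expr1n.
Qed.

Lemma char_sum (z : 'Z_d) :
  \sum_(s : 'Z_d) chi z ^+ val s = if z == 0 then d%:R else 0.
Proof.
have [->|z_neq0] := eqVneq z 0.
  under eq_bigr do rewrite expr1n.
  by rewrite sumr_const card_ord Zp_cast.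
have chi_neq1 : chi z != 1.
  rewrite -(prim_order_dvd omega_prim); apply/negP => /dvdn_leq.
  have z_gt0 : (0 < val z)%N.
    by rewrite lt0n; apply: contra z_neq0 => /eqP val_z0; apply/eqP/val_inj.
  by move=> /(_ z_gt0); rewrite leqNgt -[X in (_ < X)%N](Zp_cast d_gt1) ltn_ord.
have chi_d : chi z ^+ d = 1 by rewrite exprAC (prim_expr_order omega_prim) expr1n.
have := subrX1 (chi z) d; rewrite chi_d subrr => /esym/eqP.
rewrite mulf_eq0 subr_eq0 (negPf chi_neq1) /= => /eqP geom_sum.
rewrite -[RHS]geom_sum; set w := chi z.
by rewrite -!(big_mkord xpredT (fun i => w ^+ i)) Zp_cast.
Qed.

Lemma delta_sum (c : 'Z_d) (g : 'Z_d -> F) :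
  \sum_(s : 'Z_d) \sum_(l : 'Z_d) chi (c - l) ^+ val s * g l = d%:R * g c.
Proof.
rewrite exchange_big (bigD1 c) // -[RHS]addr0; congr (_ + _).
  by rewrite -mulr_suml char_sum subrr eqxx.
apply: big1 => l l_neq_c.
by rewrite -mulr_suml char_sum subr_eq0 eq_sym (negPf l_neq_c) mul0r.
Qed.

End Characters.

Section DifferenceSets.
Variables (F : fieldType) (d m : nat) (D : {set 'Z_d}).
Hypothesis D_diff : cyclic_diff_set m D.

Local Notation I := (indic F D).

Lemma indicM (x : 'Z_d) : I x * I x = I x.
Proof. by rewrite /indic; case: (x \in D); rewrite ?mulr1 ?mulr0. Qed.

Lemma sum_indic_inj (f : 'Z_d -> 'Z_d) : injective f -> \sum_x I (f x) = m%:R.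
Proof.
move=> f_inj; transitivity (\sum_x I x); first by rewrite [RHS](reindex_inj f_inj).
by rewrite /indic -big_mkcond /= sumr_const; case: D_diff => ->.
Qed.

Lemma pair_count (a b : 'Z_d) :
  \sum_t I (a - t) * I (b - t) = if a == b then m%:R else 1.
Proof.
have [<-|a_neq_b] := eqVneq a b.
  under eq_bigr do rewrite indicM.
  by apply: sum_indic_inj => x y /addrI/oppr_inj.
case: D_diff => _ /(_ (a - b)); rewrite subr_eq0 => /(_ a_neq_b).
case=> [[x y] [/and3P [/= xD yD /eqP x_sub_y] uniq_xy]].
rewrite (bigD1 (a - x)) // -[RHS]addr0; congr (_ + _).
  have -> : b - (a - x) = y by rewrite -[y](subKr x) x_sub_y; ring.
  by rewrite subKr /indic xD yD mulr1.
apply: big1 => t t_neq; rewrite /indic; case: ifP => atD; last by rewrite mul0r.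
case: ifP => btD; last by rewrite mulr0.
have := uniq_xy (a - t, b - t); rewrite /= atD btD opprB addrA subrK eqxx.
by move=> /(_ isT)/(congr1 fst) /= x_eq; move: t_neq; rewrite x_eq subKr eqxx.
Qed.

(* If a - u = (a - t) - (u - t) = (a + b - u - t) - (b - t) is a nonzero
   difference, its unique representation forces a - t = a + b - u - t. *)
Lemma quad_support (a b u t : 'Z_d) :
  u - t \in D -> a + b - u - t \in D -> a - t \in D -> b - t \in D ->
  u = a \/ u = b.
Proof.
move=> uD wD aD bD.
have [a_eq_u|a_neq_u] := eqVneq a u; first by left.
move: a_neq_u; rewrite -subr_eq0 => a_neq_u.
case: D_diff => _ /(_ (a - u) a_neq_u) [[x y] [_ uniq_xy]].
have := uniq_xy (a - t, u - t); rewrite /= aD uD opprB addrA subrK eqxx.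
move=> /(_ isT)/(congr1 fst) /= x_at.
have := uniq_xy (a + b - u - t, b - t).
rewrite /= wD bD opprB addrA subrK addrAC addrK eqxx.
move=> /(_ isT)/(congr1 fst) /= same_point.
right; have -> : u = (a - t) - (a + b - u - t) + b by ring.
by rewrite -same_point -x_at subrr add0r.
Qed.

Lemma quad_sum (a b : 'Z_d) (W : 'Z_d -> F) :
  \sum_u \sum_t I (u - t) * I (a + b - u - t) * I (a - t) * I (b - t) * W u =
  if a == b then m%:R * W a else W a + W b.
Proof.
have vanish u : u != a -> u != b ->
    \sum_t I (u - t) * I (a + b - u - t) * I (a - t) * I (b - t) * W u = 0.
  move=> u_neq_a u_neq_b; apply: big1 => t _; rewrite /indic.
  case: ifP => uD; last by rewrite !mul0r.
  case: ifP => wD; last by rewrite mulr0 !mul0r.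
  case: ifP => aD; last by rewrite mulr0 !mul0r.
  case: ifP => bD; last by rewrite mulr0 mul0r.
  by have [] := quad_support uD wD aD bD => u_eq; [move: u_neq_a | move: u_neq_b];
    rewrite u_eq eqxx.
have collapse x y : I x * I y * I x * I y = I x * I y /\ I y * I x * I x * I y = I x * I y.
  by rewrite /indic; case: (x \in D); case: (y \in D); rewrite ?mulr1 ?mulr0.
have term_a : \sum_t I (a - t) * I (a + b - a - t) * I (a - t) * I (b - t) * W a =
    (if a == b then m%:R else 1) * W a.
  rewrite -pair_count mulr_suml (addrC a b) addrK.
  by apply: eq_bigr => t _; rewrite (collapse _ _).1.
have [a_eq_b|a_neq_b] := eqVneq a b.
  rewrite (bigD1 a) // -[RHS]addr0; congr (_ + _); first by rewrite term_a a_eq_b eqxx.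
  by apply: big1 => u u_neq_a; apply: vanish; rewrite -?a_eq_b.
rewrite (bigD1 a) // (bigD1 b) 1?eq_sym // -[RHS]addr0 -[in RHS]addrA.
congr (_ + _); last congr (_ + _).
- by rewrite term_a (negPf a_neq_b) mul1r.
- have pair_ab : \sum_t I (a - t) * I (b - t) = 1 by rewrite pair_count (negPf a_neq_b).
  rewrite addrK -[RHS]mul1r -[in RHS]pair_ab mulr_suml.
  by apply: eq_bigr => t _; rewrite (collapse _ _).2.
- by apply: big1 => u /andP [u_neq_b u_neq_a]; apply: vanish.
Qed.

End DifferenceSets.

(* The reconstruction identity sum_j <y_j, v> y_j = c v with c invertible
   already forces {y_j} to span, so it alone certifies a tight frame. *)
Section TightFrames.
Variables (F : fieldType) (q d : nat) (I : finType).

Lemma tight_frame_fullP (y : I -> 'Z_d -> F) (c : F) : c != 0 ->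
  (forall v i, \sum_j inner q (y j) v * y j i = c * v i) -> tight_frame_full q y c.
Proof.
move=> c_neq0 frame; split=> // v; exists (fun j => c^-1 * inner q (y j) v) => i.
under eq_bigr do rewrite -mulrA.
by rewrite -mulr_sumr frame mulrA mulVf // mul1r.
Qed.

Lemma tight_frame_symP (Y : I -> 'Z_d -> 'Z_d -> F) (c : F) : c != 0 ->
  (forall j, Defs.is_sym (Y j)) ->
  (forall V, Defs.is_sym V -> forall a b, \sum_j inner2 q (Y j) V * Y j a b = c * V a b) ->
  tight_frame_sym q Y c.
Proof.
move=> c_neq0 Y_sym frame; do 2 split=> //.
move=> V V_sym; exists (fun j => c^-1 * inner2 q (Y j) V) => a b.
under eq_bigr do rewrite -mulrA.
by rewrite -mulr_sumr frame // mulrA mulVf // mul1r.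
Qed.

End TightFrames.

Section SingerDesign.
Variables (F : fieldType) (q d m : nat) (omega : F) (D : {set 'Z_d}).
Hypotheses (d_gt1 : (1 < d)%N) (omega_prim : d.-primitive_root omega).
Hypotheses (dvd_d_q1 : (d %| q.+1)%N) (q_gt0 : (0 < q)%N).
Hypotheses (D_diff : cyclic_diff_set m D) (m_eq2 : m%:R = 2 :> F).

Local Notation chi x := (omega ^+ val (x : 'Z_d)).
Local Notation I := (indic F D).

(* singer_vec (s, t) = M^s T^t 1_D, i.e. i |-> omega^(s i) 1_D(i - t). *)
Definition singer_vec (st : 'Z_d * 'Z_d) (i : 'Z_d) : F :=
  chi i ^+ val st.1 * I (i - st.2).

Lemma conj_singer_vec (st : 'Z_d * 'Z_d) (l : 'Z_d) :
  conjq q (singer_vec st l) = chi (- l) ^+ val st.1 * I (l - st.2).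
Proof.
rewrite /singer_vec conjqM conjqX (conj_chi d_gt1 omega_prim _ dvd_d_q1).
by congr (_ * _); rewrite /conjq /indic; case: (_ \in D); rewrite ?expr1n ?expr0n ?gtn_eqF.
Qed.

(* Each vector has squared norm |D|, since |chi|^2 = 1 under the conjugation. *)
Lemma singer_vec_norm (st : 'Z_d * 'Z_d) :
  inner q (singer_vec st) (singer_vec st) = m%:R.
Proof.
rewrite /inner -(sum_indic_inj F D_diff (addIr (- st.2))).
apply: eq_bigr => i _; rewrite conj_singer_vec /singer_vec mulrACA -exprMn.
by rewrite -(chiD d_gt1 omega_prim) addNr expr1n mul1r indicM.
Qed.

(* First frame identity: the sum over the modulation index s collapses the
   coordinate l of v onto i, and the sum over translations t counts |D|. *)
Lemma singer_frame1 (v : 'Z_d -> F) (i : 'Z_d) :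
  \sum_j inner q (singer_vec j) v * singer_vec j i = (d * m)%:R * v i.
Proof.
rewrite -(pair_bigA _ (fun s t => inner q (singer_vec (s, t)) v * singer_vec (s, t) i)).
rewrite exchange_big /=.
transitivity (\sum_(t : 'Z_d) \sum_(s : 'Z_d) \sum_(l : 'Z_d)
                chi (i - l) ^+ val s * (I (l - t) * I (i - t) * v l)).
  apply: eq_bigr => t _; apply: eq_bigr => s _; rewrite /inner mulr_suml.
  apply: eq_bigr => l _; rewrite conj_singer_vec /singer_vec (chiD d_gt1 omega_prim) exprMn.
  set x := chi (- l) ^+ _; set y := chi i ^+ _; ring.
under eq_bigr do rewrite (delta_sum d_gt1 omega_prim) indicM.
have reflect_inj : injective (fun t : 'Z_d => i - t) by move=> x y /addrI/oppr_inj.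
by rewrite -mulr_sumr -mulr_suml (sum_indic_inj F D_diff reflect_inj) natrM mulrA.
Qed.

(* Second frame identity on symmetric tensors: the modulation sum forces
   u + w = a + b, and quad_sum evaluates what remains; this is where |D| = 2
   is needed, so that the diagonal a = b gets the same weight as a != b. *)
Lemma singer_frame2 (V : 'Z_d -> 'Z_d -> F) : Defs.is_sym V -> forall a b,
  \sum_j inner2 q (tensor2 (singer_vec j)) V * tensor2 (singer_vec j) a b = (2 * d)%:R * V a b.
Proof.
move=> V_sym a b.
rewrite -(pair_bigA _ (fun s t => inner2 q (tensor2 (singer_vec (s, t))) V *
                                  tensor2 (singer_vec (s, t)) a b)).
rewrite exchange_big /=.
pose Q t u w := I (u - t) * I (w - t) * I (a - t) * I (b - t) * V u w.
transitivity (\sum_(t : 'Z_d) \sum_(u : 'Z_d) \sum_(s : 'Z_d) \sum_(w : 'Z_d)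
                chi (a + b - u - w) ^+ val s * Q t u w).
  apply: eq_bigr => t _; under eq_bigr do rewrite /inner2 mulr_suml.
  rewrite exchange_big; apply: eq_bigr => u _; apply: eq_bigr => s _.
  rewrite mulr_suml; apply: eq_bigr => w _.
  rewrite /tensor2 conjqM !conj_singer_vec /singer_vec /Q !(chiD d_gt1 omega_prim) !exprMn.
  set xa := chi a ^+ _; set xb := chi b ^+ _; set xu := chi (- u) ^+ _; set xw := chi (- w) ^+ _.
  ring.
under eq_bigr do under eq_bigr do rewrite (delta_sum d_gt1 omega_prim).
under eq_bigr do rewrite -mulr_sumr.
rewrite -mulr_sumr exchange_big.
rewrite /Q (quad_sum D_diff a b (fun u => V u (a + b - u))).
have [<-|a_neq_b] := eqVneq a b; first by rewrite addrK m_eq2 natrM mulrCA mulrA.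
by rewrite addrK (addrC a b) addrK (V_sym b a) natrM; ring.
Qed.

Theorem singer_design : (2 * d)%:R != 0 :> F ->
  projective_2design q singer_vec 2 (2 * d)%:R (2 * d)%:R.
Proof.
move=> c_neq0; have frame_const : (d * m)%:R = (2 * d)%:R :> F by rewrite !natrM m_eq2 mulrC.
split=> [st|]; first by rewrite singer_vec_norm m_eq2.
split; first by apply: tight_frame_fullP => // v i; rewrite singer_frame1 frame_const.
apply: tight_frame_symP singer_frame2 => // j x y.
by rewrite /tensor2 mulrC.
Qed.

End SingerDesign.

Lemma iter_modM (F : fieldType) (d n : nat) (omega : F) (f : 'Z_d -> F) (x : 'Z_d) :
  iter n (modM omega) f x = (omega ^+ val x) ^+ n * f x.
Proof. by elim: n => [|n IHn]; rewrite ?mul1r //= /modM IHn exprS mulrA. Qed.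

Lemma iter_shiftT (F : fieldType) (d n : nat) (f : 'Z_d -> F) (x : 'Z_d) :
  iter n (@shiftT F d) f x = f (x - n%:R).
Proof.
elim: n x => [|n IHn] x; first by rewrite subr0.
by rewrite /= /shiftT IHn mulrS opprD addrA.
Qed.

Lemma natr_eq1_char (R : nzRingType) (p r : nat) :
  p \in [pchar R] -> (p %| r - 1)%N -> (0 < r)%N -> r%:R = 1 :> R.
Proof.
move=> charRp dvd_p_r1 r_gt0; rewrite -(subnK r_gt0) natrD.
by move: dvd_p_r1; rewrite (dvdn_pcharf charRp) => /eqP ->; rewrite add0r.
Qed.

Lemma prime_gt3_ndvd6 (p : nat) : prime p -> (3 < p)%N -> ~~ (p %| 6)%N.
Proof.
move=> p_prime p_gt3.
by rewrite (Euclid_dvdM 2 3 p_prime) !gtnNdvd // ltnW.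
Qed.

Unset Implicit Arguments.

Theorem mainTheorem12
  (p k r q d : nat) (F : finFieldType) (alpha : F) (D : {set 'Z_d})
  (Hp : prime p) (Hk : (1 <= k)%N) (Hr : prime_power r)
  (Hpr : (p %| r - 1)%N) (Hdiv : (r ^ 2 + r + 1 %| p ^ k + 1)%N)
  (Hq : q = (p ^ k)%N) (Hd : d = (r ^ 2 + r + 1)%N)
  (HF : #|F| = (q ^ 2)%N)
  (Halpha : (q ^ 2 - 1).-primitive_root alpha)
  (HD : cyclic_diff_set (r + 1) D)
  (Hp3 : (3 < p)%N) :
  let omega := alpha ^+ ((q ^ 2 - 1) %/ d) in
  projective_2design q
    (fun st : 'Z_d * 'Z_d =>
       iter (val st.1) (modM omega) (iter (val st.2) (@shiftT F d) (indic F D)))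
    (2%:R) ((2 * d)%:R) (6%:R).
Proof.
move=> omega.
have r_gt0 : (0 < r)%N by case: Hr => l [e [l_prime [_ ->]]]; rewrite expn_gt0 prime_gt0.
have d_gt1 : (1 < d)%N by rewrite Hd addn1 ltnS ltn_addl.
have q_gt0 : (0 < q)%N by rewrite Hq expn_gt0 prime_gt0.
have dvd_d_q1 : (d %| q.+1)%N by rewrite -addn1 Hd Hq.
have dvd_d_order : (d %| q ^ 2 - 1)%N.
  by rewrite -{2}(exp1n 2) subn_sqr addn1 dvdn_mull.
have omega_prim : d.-primitive_root omega := dvdn_prim_root Halpha dvd_d_order.
have charFp : p \in [pchar F].
  by apply: (card_finPcharP (n := (k * 2)%N)); rewrite // HF Hq expnM.
have r_eq1 : r%:R = 1 :> F := natr_eq1_char charFp Hpr r_gt0.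
have m_eq2 : (r + 1)%:R = 2 :> F by rewrite natrD r_eq1.
have twice_d : (2 * d)%:R = 6%:R :> F by rewrite Hd natrM !natrD natrX r_eq1; ring.
have family_eq : (fun st : 'Z_d * 'Z_d =>
    iter (val st.1) (modM omega) (iter (val st.2) (@shiftT F d) (indic F D))) =
    singer_vec omega D.
  do 2 apply: functional_extensionality => ?.
  by rewrite iter_modM iter_shiftT natr_Zp.
rewrite family_eq -twice_d; apply: (singer_design d_gt1 omega_prim dvd_d_q1 q_gt0 HD m_eq2).
by rewrite twice_d -(dvdn_pcharf charFp) prime_gt3_ndvd6.
Qed.
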